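(* Let $R_1\subset J_1(E)$ be a linear first order system on a vector bundle $E$ of fiber dimension $m$ over an $n$-dimensional base, with coefficients in a differential field $K$, which is involutive and has no zero order equations. Assume the system is written in $\delta$-regular coordinates and solved as in the definition of involution, and that the number $\beta=\beta^n_1$ of equations of class $n$ satisfies $\beta<m$, these equations being solved with respect to $y^1_n,\dots,y^\beta_n$. Then there is a change of unknowns of the form $\bar y^k=y^k-\sum_{l=\beta+1}^m a^k_l(x)\,y^l$ for $1\le k\le\beta$ and $\bar y^l=y^l$ for $\beta<l\le m$ (with $a^k_l\in K$) such that, in the new unknowns: (i) the equations of class $n$ contain $y^{\beta+1},\dots,y^m$ only through $y^l$ and $y^l_i$ with $1\le i\le n-1$ (no jet $y^l_n$, $l>\beta$, appears); (ii) the equations of class $1,\dots,n-1$ contain neither $y^{\beta+1},\dots,y^m$ nor any of their jets.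
   Context: $y^k_i$ denotes the formal first derivative $d_iy^k$. A first order equation solved in a coordinate system is of class $i$ if its leading (principal) jet is of the form $y^k_i$ and it contains no jet $y^l_j$ with $j>i$. Procedure defining classes: solve the maximum number $\beta^n_1$ of equations with respect to jets of class $n$, then the maximum number of remaining equations with respect to jets of class $n-1$, and so on; for an equation of class $i$ the variables $x^1,\dots,x^i$ are multiplicative and $x^{i+1},\dots,x^n$ non-multiplicative. The system is involutive if it is formally integrable and its first prolongation is obtained by prolonging each equation only with respect to its multiplicative variables (coordinates in which this procedure is carried out are called $\delta$-regular). ''No zero order equations'' means the induced projection $R_1\to E$ is onto. *)

From HB Require Import structures.
From mathcomp Require Import all_boot all_order all_algebra.
Set Implicit Arguments. Unset Strict Implicit. Unset Printing Implicit Defensive.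
Import Order.TTheory GRing.Theory Num.Theory.
Local Open Scope ring_scope.

(* d i = formal d/dx^(i+1) acting on the coefficients.                 *)
Definition is_diff_field (K : fieldType) (n : nat) (d : 'I_n -> K -> K) : Prop :=
  [/\ (forall i x y, d i (x + y) = d i x + d i y),
      (forall i x y, d i (x * y) = d i x * y + x * d i y) &
      (forall i j x, d i (d j x) = d j (d i x))].

Definition mindex (n : nat) := {ffun 'I_n -> nat}.
Definition mi_deg n (mu : mindex n) : nat := (\sum_(i < n) mu i)%N.
Definition mi_zero n : mindex n := [ffun => 0%N].
Definition mi_unit n (j : 'I_n) : mindex n := [ffun i => nat_of_bool (i == j)].
Definition mi_dec n (j : 'I_n) (mu : mindex n) : mindex n :=
  [ffun i => if i == j then (mu i).-1 else mu i].

(* A linear (homogeneous) differential form in the unknowns y^1..y^m :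
   Phi = sum_{k,mu} Phi k mu * y^k_mu, with finitely many nonzero
   coefficients (all considered forms have bounded order).            *)
Definition lform (K : fieldType) (m n : nat) := 'I_m -> mindex n -> K.

Definition form_eq (K : fieldType) (m n : nat) (P Q : lform K m n) : Prop :=
  forall k mu, P k mu = Q k mu.

Definition order_le (K : fieldType) (m n : nat) (q : nat) (P : lform K m n) : Prop :=
  forall k mu, (q < mi_deg mu)%N -> P k mu = 0.

(* Formal derivative d_j of a linear form (prolongation w.r.t. x^j):
   d_j (sum c y^k_mu) = sum (d_j c) y^k_mu + c y^k_(mu + 1_j).        *)
Definition prol (K : fieldType) (m n : nat) (d : 'I_n -> K -> K) (j : 'I_n) (P : lform K m n)
  : lform K m n :=
  fun k mu => d j (P k mu) + (if (0 < mu j)%N then P k (mi_dec j mu) else 0).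

Definition lincomb (K : fieldType) (m n : nat) N (lam : 'I_N -> K) (Phi : 'I_N -> lform K m n)
  : lform K m n :=
  fun k mu => \sum_(t < N) lam t * Phi t k mu.

Definition in_span (K : fieldType) (m n : nat) N (Phi : 'I_N -> lform K m n) (P : lform K m n) : Prop :=
  exists lam : 'I_N -> K, form_eq (lincomb lam Phi) P.

(* A first order system R_1 given by N equations Phi t, equation t     *)
(* being of class (cls t)+1 (0-based index cls t) and solved w.r.t.    *)
(* the leading jet y^(ld t)_(cls t), as in the definition of involution*)
Definition solved_system (K : fieldType) (m n : nat) N (Phi : 'I_N -> lform K m n)
  (cls : 'I_N -> 'I_n) (ld : 'I_N -> 'I_m) : Prop :=
  [/\ (forall t, order_le 1 (Phi t)),
      (forall t, Phi t (ld t) (mi_unit (cls t)) = 1),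
      (forall t k (j : 'I_n), (cls t < j)%N -> Phi t k (mi_unit j) = 0) &
      (forall t s, t != s -> cls s = cls t ->
          Phi s (ld t) (mi_unit (cls t)) = 0)].

(* R_1 -> E onto : no (nonzero) zero order equation in the system *)
Definition no_zero_order (K : fieldType) (m n : nat) N (Phi : 'I_N -> lform K m n) : Prop :=
  forall lam : 'I_N -> K, order_le 0 (lincomb lam Phi) ->
    form_eq (lincomb lam Phi) (fun _ _ => 0).

(* formal integrability: R_2 -> R_1 onto, i.e. every first order
   consequence of the equations and their first prolongations is
   already a combination of the equations.                             *)
Definition formally_integrable (K : fieldType) (m n : nat) N (d : 'I_n -> K -> K)
  (Phi : 'I_N -> lform K m n) : Prop :=
  forall (lam : 'I_N -> K) (nu : 'I_N -> 'I_n -> K),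
    let P := fun k mu => \sum_(t < N)
               (lam t * Phi t k mu + \sum_(j < n) nu t j * prol d j (Phi t) k mu) in
    order_le 1 P -> in_span Phi P.

(* involutive: formally integrable, and the first prolongation is
   spanned by the equations and their prolongations w.r.t.
   multiplicative variables only (x^1..x^(cls+1), i.e. l <= cls).     *)
Definition involutive_system (K : fieldType) (m n : nat) N (d : 'I_n -> K -> K)
  (Phi : 'I_N -> lform K m n) (cls : 'I_N -> 'I_n) : Prop :=
  formally_integrable d Phi /\
  forall (t : 'I_N) (j : 'I_n), (cls t < j)%N ->
    exists (lam : 'I_N -> K) (nu : 'I_N -> 'I_n -> K),
      form_eq (prol d j (Phi t))
        (fun k mu => \sum_(s < N)
           (lam s * Phi s k mu +
            \sum_(l < n | (l <= cls s)%N) nu s l * prol d l (Phi s) k mu)).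

(* Change of unknowns  ybar^k = y^k - sum_{l >= beta} a k l y^l (k < beta),
   ybar^l = y^l (l >= beta): rewriting a first order form in the new
   unknowns (substitute y^k = ybar^k + sum_l a k l y^l).  The result
   gives the coefficient of ybar^k_mu (k < beta) resp. y^l_mu (l >= beta). *)
Definition change_unknowns (K : fieldType) (m n : nat) (d : 'I_n -> K -> K) (beta : nat)
  (a : 'I_m -> 'I_m -> K) (P : lform K m n) : lform K m n :=
  fun l mu =>
    if (beta <= l)%N then
      P l mu + \sum_(k < m | (k < beta)%N) P k mu * a k l
      + (if mu == mi_zero n then
           \sum_(k < m | (k < beta)%N) \sum_(i < n) P k (mi_unit i) * d i (a k l)
         else 0)
    else P l mu.

From HB Require Import structures.
From mathcomp Require Import all_boot all_order all_algebra.
Import GRing.Theory.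
From mathcomp Require Import zify ring.
Set Implicit Arguments.
Local Open Scope ring_scope.

(* Write x^n for the last variable and U = 1_n.  The equations
   of class n are solved w.r.t. y^(ld s)_n, and each such leading jet occurs
   in exactly one of them.  Taking
     a k l = - (coefficient of y^l_n in the class-n equation solved for y^k_n)
   eliminates y^l_n (l >= beta) from all class-n equations: this is (i).
   For an equation t of lower class, involution says that its prolongation
   d_n Phi_t (x^n being non-multiplicative) is a combination
     sum_s lam_s Phi_s + sum_s sum_{l <= cls s} nu_s^l d_l Phi_s.
   Comparing the coefficients of the jets y^k_nn, y^k_in, y^k_n and y^k
   identifies the multipliers nu_s, lam_s of the class-n equations and
   expresses the first and zero order coefficients of Phi_t through those
   of the class-n equations; these are exactly the expressions produced by
   the change of unknowns, so all y^l (l >= beta) disappear: this is (ii). *)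

Lemma mi_deg_ge n (mu : mindex n) j : (mu j <= mi_deg mu)%N.
Proof. by rewrite /mi_deg (bigD1 j) //= leq_addr. Qed.

Lemma mi_deg_zero n : mi_deg (mi_zero n) = 0%N.
Proof. by rewrite /mi_deg big1 // => j _; rewrite ffunE. Qed.

Lemma mi_unit_neq0 n (j : 'I_n) : (mi_unit j == mi_zero n) = false.
Proof.
apply/negbTE/eqP => /(congr1 (fun f : mindex n => f j)).
by rewrite /mi_unit /mi_zero !ffunE eqxx.
Qed.

Lemma mi_dec_unit n (j : 'I_n) : mi_dec j (mi_unit j) = mi_zero n.
Proof. by apply/ffunP => i; rewrite !ffunE; case: (i == j). Qed.

Lemma mi_deg0 n (mu : mindex n) : mi_deg mu = 0%N -> mu = mi_zero n.
Proof.
move=> h; apply/ffunP => i; rewrite ffunE.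
by have := mi_deg_ge mu i; rewrite h leqn0 => /eqP.
Qed.

Lemma mi_deg1 n (mu : mindex n) : mi_deg mu = 1%N -> exists i, mu = mi_unit i.
Proof.
move=> h.
have [i hi] : exists i, (0 < mu i)%N.
  apply/existsP; apply: contraT; rewrite negb_exists => /forallP H.
  move: h; rewrite /mi_deg big1 // => i _.
  by have := H i; rewrite lt0n negbK => /eqP.
exists i; move: h; rewrite /mi_deg (bigD1 i) //= => h.
set rest := (\sum_(j < n | j != i) mu j)%N in h.
have rest0 : rest = 0%N by lia.
apply/ffunP => j; rewrite ffunE.
case: (eqVneq j i) => [->|nji] /=; first by lia.
by move/eqP: rest0; rewrite /rest sum_nat_eq0 => /forallP /(_ j); rewrite nji => /eqP.
Qed.

Lemma prol_high (K : fieldType) m n (d : 'I_n -> K -> K) j (P : lform K m n) k mu :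
  (forall i, d i 0 = 0) -> order_le 1 P -> (1 < mi_deg mu)%N ->
  prol d j P k mu = if (0 < mu j)%N then P k (mi_dec j mu) else 0.
Proof. by move=> d0 ord1 hmu; rewrite /prol ord1 // d0 add0r. Qed.

Lemma sum_select (K : fieldType) n (j c : 'I_n) (F : 'I_n -> K) :
  \sum_(l < n | (l <= c)%N) (if l == j then F l else 0)
  = if (j <= c)%N then F j else 0.
Proof.
case: ifP => hjc.
  by rewrite (bigD1 j) //= eqxx big1 ?addr0 // => l /andP [_ /negbTE ->].
by apply: big1 => l hl; case: eqP => // elj; move: hl; rewrite elj hjc.
Qed.

Lemma ord_max_leq n (c : 'I_n.+1) : (@ord_max n <= c)%N = (c == ord_max).
Proof. by rewrite -val_eqE /= eqn_leq leq_ord. Qed.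

Lemma solved_lead_delta (K : fieldType) m n N (Phi : 'I_N -> lform K m n)
    cls ld (c : 'I_n) s s' :
  solved_system Phi cls ld -> cls s = c -> cls s' = c ->
  Phi s (ld s') (mi_unit c) = (s == s')%:R.
Proof.
move=> [_ lead1 _ solved] Cs Cs'; case: (eqVneq s s') => [<-|nss].
  by rewrite -Cs lead1.
by rewrite -Cs' solved 1?eq_sym // Cs Cs'.
Qed.

Section Derivation.
Variables (K : fieldType) (D : K -> K).
Hypothesis D_add : forall x y, D (x + y) = D x + D y.
Hypothesis D_mul : forall x y, D (x * y) = D x * y + x * D y.

Lemma deriv0 : D 0 = 0.
Proof. by apply: (addrI (D 0)); rewrite addr0 -D_add addr0. Qed.

Lemma deriv1 : D 1 = 0.
Proof.
have h := D_mul 1 1; rewrite !mul1r mulr1 in h.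
by apply: (addrI (D 1)); rewrite addr0 -h.
Qed.

Lemma derivN x : D (- x) = - D x.
Proof. by apply/eqP; rewrite -subr_eq0 opprK -D_add addNr deriv0. Qed.

Lemma deriv_sum (I : finType) (P : pred I) (F : I -> K) :
  D (\sum_(j | P j) F j) = \sum_(j | P j) D (F j).
Proof. exact: (big_morph D D_add deriv0). Qed.
End Derivation.

Section Elimination.
Variables (K : fieldType) (m n N : nat) (d : 'I_n.+1 -> K -> K).
Variables (Phi : 'I_N -> lform K m n.+1) (cls : 'I_N -> 'I_n.+1) (ld : 'I_N -> 'I_m).
Variable beta : nat.
Hypothesis d_add : forall i x y, d i (x + y) = d i x + d i y.

Local Notation nn := (@ord_max n).
Local Notation U := (mi_unit nn).
Local Notation top s := (cls s == nn).

Hypothesis lead_top : forall s s', top s -> top s' -> Phi s (ld s') U = (s == s')%:R.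
Hypothesis ld_top : forall s, top s -> (ld s < beta)%N.

Definition elim_coef (k l : 'I_m) : K :=
  - \sum_(s | top s && (ld s == k)) Phi s l U.

Lemma sum_elim_coef (f : 'I_m -> K) (g : 'I_N -> K) :
  \sum_(k < m | (k < beta)%N) f k * (- \sum_(s | top s && (ld s == k)) g s)
  = - \sum_(s | top s) f (ld s) * g s.
Proof.
rewrite (partition_big ld (fun k : 'I_m => (k < beta)%N)) //.
rewrite -sumrN; apply: eq_bigr => k _.
rewrite mulrN mulr_sumr; congr (- _); apply: eq_bigr => s /andP [_ /eqP <-] //.
Qed.

Lemma change_unit (P : lform K m n.+1) (l : 'I_m) i : (beta <= l)%N ->
  change_unknowns d beta elim_coef P l (mi_unit i)
  = P l (mi_unit i) - \sum_(s | top s) P (ld s) (mi_unit i) * Phi s l U.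
Proof. by move=> hl; rewrite /change_unknowns hl mi_unit_neq0 addr0 sum_elim_coef. Qed.

Lemma change_zero (P : lform K m n.+1) (l : 'I_m) : (beta <= l)%N ->
  change_unknowns d beta elim_coef P l (mi_zero _)
  = P l (mi_zero _) - \sum_(s | top s) (P (ld s) (mi_zero _) * Phi s l U
      + \sum_(i < n.+1) P (ld s) (mi_unit i) * d i (Phi s l U)).
Proof.
move=> hl; rewrite /change_unknowns hl eqxx /elim_coef sum_elim_coef.
have -> : \sum_(k < m | (k < beta)%N) \sum_(i < n.+1)
     P k (mi_unit i) * d i (- \sum_(s | top s && (ld s == k)) Phi s l U)
   = - \sum_(s | top s) \sum_(i < n.+1) P (ld s) (mi_unit i) * d i (Phi s l U).
  rewrite exchange_big /= [in RHS]exchange_big /= -sumrN.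
  apply: eq_bigr => i _.
  under eq_bigr => k _ do rewrite (@derivN _ _ (d_add i)) (@deriv_sum _ _ (d_add i)).
  exact: sum_elim_coef.
by rewrite big_split /=; ring.
Qed.

Lemma change_high (P : lform K m n.+1) l mu :
  order_le 1 P -> (1 < mi_deg mu)%N ->
  change_unknowns d beta elim_coef P l mu = 0.
Proof.
move=> ord1 hmu; have mu0 : (mu == mi_zero _) = false.
  by apply/negbTE/eqP => e; move: hmu; rewrite e mi_deg_zero.
rewrite /change_unknowns mu0 addr0 ord1 // add0r big1 ?addr0 ?if_same // => k _.
by rewrite ord1 // mul0r.
Qed.

Lemma top_eliminated t (l : 'I_m) : top t -> (beta <= l)%N ->
  change_unknowns d beta elim_coef (Phi t) l U = 0.
Proof.
move=> Ct hl; rewrite change_unit // (bigD1 t) //= big1 ?addr0.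
  by rewrite lead_top // eqxx mul1r subrr.
by move=> s /andP [Cs nst]; rewrite lead_top // eq_sym (negbTE nst) mul0r.
Qed.

Lemma low_eliminated (P : lform K m n.+1) (l : 'I_m) mu :
  order_le 1 P -> (beta <= l)%N ->
  (forall i k, P k (mi_unit i) = \sum_(s | top s) P (ld s) (mi_unit i) * Phi s k U) ->
  (forall k, P k (mi_zero _) = \sum_(s | top s) (P (ld s) (mi_zero _) * Phi s k U
      + \sum_(i < n.+1) P (ld s) (mi_unit i) * d i (Phi s k U))) ->
  change_unknowns d beta elim_coef P l mu = 0.
Proof.
move=> ord1 hl first zero.
have [h0|[h1|h2]] : mi_deg mu = 0%N \/ mi_deg mu = 1%N \/ (1 < mi_deg mu)%N by lia.
- by rewrite (mi_deg0 h0) change_zero // -zero subrr.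
- by have [i ->] := mi_deg1 h1; rewrite change_unit // -first subrr.
- exact: change_high.
Qed.
End Elimination.

Section Involution.
Variables (K : fieldType) (m n N : nat) (d : 'I_n.+1 -> K -> K).
Variables (Phi : 'I_N -> lform K m n.+1) (cls : 'I_N -> 'I_n.+1) (ld : 'I_N -> 'I_m).
Hypothesis d0 : forall i, d i 0 = 0.
Hypothesis d1 : forall i, d i 1 = 0.

Local Notation nn := (@ord_max n).
Local Notation U := (mi_unit nn).
Local Notation top s := (cls s == nn).

Hypothesis ord1 : forall s, order_le 1 (Phi s).
Hypothesis beyond0 : forall s k (j : 'I_n.+1), (cls s < j)%N -> Phi s k (mi_unit j) = 0.
Hypothesis lead_top : forall s s', top s -> top s' -> Phi s (ld s') U = (s == s')%:R.

Variables (t : 'I_N) (lam : 'I_N -> K) (nu : 'I_N -> 'I_n.+1 -> K).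
Hypothesis t_low : (cls t < nn)%N.
Hypothesis prol_id : form_eq (prol d nn (Phi t))
  (fun k mu => \sum_(s < N)
     (lam s * Phi s k mu +
      \sum_(l < n.+1 | (l <= cls s)%N) nu s l * prol d l (Phi s) k mu)).

Lemma low_U k : Phi t k U = 0.
Proof. exact: beyond0. Qed.

Lemma nontop_U s k : ~~ top s -> Phi s k U = 0.
Proof. by move=> nCs; apply: beyond0; rewrite ltnNge ord_max_leq. Qed.

Lemma Phi_high s k mu : (1 < mi_deg mu)%N -> Phi s k mu = 0.
Proof. exact: ord1. Qed.

Lemma sum_top_pick (c : 'I_N -> K) s : top s ->
  \sum_(s' | top s') c s' * Phi s' (ld s) U = c s.
Proof.
move=> Cs; rewrite (bigD1 s) //= lead_top // eqxx mulr1 big1 ?addr0 //.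
by move=> s' /andP [Cs' ns]; rewrite lead_top // (negbTE ns) mulr0.
Qed.

(* Coefficient of y^k_nn: the class-n equations are not prolonged along x^n. *)
Lemma nu_top_n s : top s -> nu s nn = 0.
Proof.
move=> Cs; rewrite -(sum_top_pick (fun s' => nu s' nn)) //.
pose D2 : mindex n.+1 := [ffun j => ((j == nn) * 2)%N].
have D2deg : (1 < mi_deg D2)%N.
  by apply: leq_trans (mi_deg_ge D2 nn); rewrite ffunE eqxx.
have D2dec : mi_dec nn D2 = U by apply/ffunP => j; rewrite !ffunE; case: eqP.
have := prol_id (ld s) D2.
rewrite prol_high // ffunE eqxx /= D2dec low_U => E.
rewrite [RHS]E big_mkcond /=; apply: eq_bigr => s' _.
rewrite (Phi_high s' (ld s) D2 D2deg) mulr0 add0r.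
rewrite (eq_bigr (fun l => if l == nn then nu s' l * Phi s' (ld s) U else 0)).
  by rewrite sum_select ord_max_leq.
by move=> j _; rewrite prol_high // ffunE; case: eqP => [->|_] //=; rewrite ?D2dec ?mulr0.
Qed.

(* Coefficient of y^k_in (i < n): it expresses the first order part of Phi_t. *)
Lemma low_unit_nu i k : i != nn ->
  Phi t k (mi_unit i) = \sum_(s | top s) nu s i * Phi s k U.
Proof.
move=> ni.
pose M : mindex n.+1 := [ffun j => ((j == i) + (j == nn))%N].
have Mdeg : (1 < mi_deg M)%N.
  rewrite /mi_deg (bigD1 i) //= (bigD1 nn) ?ffunE ?eqxx ?(negbTE ni) ?[nn == i]eq_sym
    ?(negbTE ni) /=; lia.
have Mdec_n : mi_dec nn M = mi_unit i.
  by apply/ffunP => j; rewrite !ffunE; case: (eqVneq j nn) => [->|_] /=;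
     rewrite ?addn1 ?addn0.
have Mdec_i : mi_dec i M = U.
  by apply/ffunP => j; rewrite !ffunE; case: (eqVneq j i) => [->|_].
have := prol_id k M.
rewrite prol_high // ffunE eqxx addn1 /= Mdec_n => ->.
rewrite [RHS]big_mkcond /=; apply: eq_bigr => s _.
rewrite (Phi_high s k M Mdeg) mulr0 add0r.
rewrite (eq_bigr (fun l => (if l == i then nu s l * Phi s k U else 0)
                         + (if l == nn then nu s l * Phi s k (mi_unit i) else 0))).
  rewrite big_split /= !sum_select ord_max_leq.
  case: (eqVneq (cls s) nn) => [Cs|nCs].
    by rewrite Cs leq_ord nu_top_n ?Cs // mul0r addr0.
  by rewrite addr0 nontop_U // mulr0 if_same.
move=> j _; rewrite prol_high // ffunE.
case: (eqVneq j i) => [->|nji] /=; first by rewrite (negbTE ni) /= Mdec_i addr0.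
case: (eqVneq j nn) => [->|njn] /=; first by rewrite Mdec_n add0r.
by rewrite mulr0 addr0.
Qed.

Lemma nu_top_i s i : top s -> i != nn -> nu s i = Phi t (ld s) (mi_unit i).
Proof. by move=> Cs ni; rewrite low_unit_nu // sum_top_pick. Qed.

Lemma low_unit i k :
  Phi t k (mi_unit i) = \sum_(s | top s) Phi t (ld s) (mi_unit i) * Phi s k U.
Proof.
case: (eqVneq i nn) => [->|ni].
  by rewrite low_U big1 // => s _; rewrite low_U mul0r.
by rewrite low_unit_nu //; apply: eq_bigr => s Cs; rewrite nu_top_i.
Qed.

(* Coefficient of y^k_n: the zero order part of Phi_t. *)
Lemma low_zero_lam k : Phi t k (mi_zero _) = \sum_(s | top s)
   (lam s * Phi s k U + \sum_(j < n.+1) Phi t (ld s) (mi_unit j) * d j (Phi s k U)).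
Proof.
have := prol_id k U.
rewrite /prol low_U d0 add0r ffunE eqxx /= mi_dec_unit => ->.
rewrite [RHS]big_mkcond /=; apply: eq_bigr => s _.
case: (eqVneq (cls s) nn) => [Cs|nCs].
  congr (_ + _).
  rewrite (eq_bigl (fun _ => true)); last by move=> j; rewrite Cs leq_ord.
  apply: eq_bigr => j _; rewrite ffunE.
  case: (eqVneq j nn) => [->|njn] /=; last by rewrite addr0 nu_top_i ?Cs.
  by rewrite nu_top_n ?Cs // low_U !mul0r.
rewrite nontop_U // mulr0 add0r big1 // => j hj; rewrite d0 add0r ffunE.
case: (eqVneq j nn) => [ejn|] /=; last by rewrite mulr0.
by move: hj; rewrite ejn ord_max_leq (negbTE nCs).
Qed.

Lemma lam_top s : top s -> lam s = Phi t (ld s) (mi_zero _).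
Proof.
move=> Cs; rewrite low_zero_lam (bigD1 s) //= lead_top // eqxx mulr1.
rewrite big1 ?addr0; last by move=> j _; rewrite d1 mulr0.
rewrite big1 ?addr0 // => s' /andP [Cs' ns].
rewrite lead_top // (negbTE ns) mulr0 add0r big1 // => j _.
by rewrite d0 mulr0.
Qed.

Lemma low_zero k : Phi t k (mi_zero _) = \sum_(s | top s)
   (Phi t (ld s) (mi_zero _) * Phi s k U
    + \sum_(j < n.+1) Phi t (ld s) (mi_unit j) * d j (Phi s k U)).
Proof. by rewrite low_zero_lam; under eq_bigr => s Cs do rewrite lam_top //. Qed.
End Involution.

Unset Implicit Arguments.
Theorem theorem2p10 (K : fieldType) (n m N : nat) (d : 'I_n -> K -> K)
  (Phi : 'I_N -> lform K m n) (cls : 'I_N -> 'I_n) (ld : 'I_N -> 'I_m)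
  (beta : nat) :
  [pchar K] =i pred0 ->
  is_diff_field d ->
  solved_system Phi cls ld ->
  no_zero_order Phi ->
  involutive_system d Phi cls ->
  beta = #|[pred t : 'I_N | (cls t : nat) == n.-1]| ->
  (beta < m)%N ->
  (forall t, (cls t : nat) = n.-1 -> (ld t < beta)%N) ->
  exists a : 'I_m -> 'I_m -> K,
    (forall t, (cls t : nat) = n.-1 -> forall l : 'I_m, (beta <= l)%N ->
        change_unknowns d beta a (Phi t) l (mi_unit (cls t)) = 0) /\
    (forall t, (cls t < n.-1)%N -> forall (l : 'I_m) (mu : mindex n), (beta <= l)%N ->
        change_unknowns d beta a (Phi t) l mu = 0).
Proof.
move=> _ [d_add d_mul _] solved _ [_ invol] _ _ ld_top.
case: n d Phi cls ld d_add d_mul invol solved ld_top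
  => [|n] d Phi cls ld d_add d_mul invol solved ld_top.
  by exists (fun _ _ => 0); split => t; case: (cls t).
have [ord1 _ beyond0 _] := solved.
have top_eq s : (cls s : nat) = n -> cls s = ord_max by move=> h; apply: val_inj.
have lead_top s s' : cls s == ord_max -> cls s' == ord_max ->
    Phi s (ld s') (mi_unit ord_max) = (s == s')%:R.
  by move=> /eqP Cs /eqP Cs'; exact: solved_lead_delta solved Cs Cs'.
have ld_top_max s : cls s == ord_max -> (ld s < beta)%N.
  by move=> /eqP Cs; apply: ld_top; rewrite Cs.
exists (elim_coef Phi cls ld); split.
  move=> t /top_eq Ct l hl; rewrite Ct.
  by apply: top_eliminated; rewrite ?Ct.
move=> t t_low l mu hl.
have [lam [nu prol_id]] := invol t ord_max t_low.
have d0 i := @deriv0 _ _ (d_add i).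
have d1 i := @deriv1 _ _ (d_mul i).
apply: low_eliminated => // [i k|k].
- exact: (low_unit Phi cls ld d0 ord1 beyond0 lead_top t lam nu t_low prol_id).
- exact: (low_zero Phi cls ld d0 d1 ord1 beyond0 lead_top t lam nu t_low prol_id).
Qed.
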